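(* Let $f\colon 2^{\mathcal{N}}\to\mathbb{R}$ be non-negative and submodular, $|\mathcal{N}|=n$, $k$ a positive integer, $\varepsilon>0$, and let $S\subseteq\mathcal{N}$ with $|S|=k$. Assume $\mathcal{N}\setminus S$ contains a dummy element $d$ (i.e., $f(A\cup\{d\})=f(A)$ for all $A\subseteq\mathcal{N}$). Suppose there exist an integer $1\le t\le k$ and sets $T_+\subseteq\mathcal{N}\setminus S$, $T_-\subseteq S$ with $|T_+|=|T_-|=t$ and \[ \sum_{u\in T_+} f(u\mid S)\ >\ \sum_{v\in T_-} f(v\mid S-v)+\varepsilon f(S). \] Let $Z$ be a uniformly random subset of $\mathcal{N}$ of size $\lceil n/k\rceil$. Let $u$ be an element of $Z\setminus S$ maximizing $f(u\mid S)$, except that $u:=d$ if $Z\setminus S=\emptyset$ or $\max_{u'\in Z\setminus S}f(u'\mid S)\le 0$. Let $v\in\arg\min_{v'\in S} f(v'\mid S-v')$. Define $S'=S-v+u$ if $f(S-v+u)>f(S)$, and $S'=S$ otherwise. Then \[ \mathbb{E}\big[f(S')-f(S)\big]\ \ge\ \frac{(1-1/e)\,\varepsilon}{k}\, f(S). \]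
   Context: Notation: $f(u\mid A)=f(A\cup\{u\})-f(A)$; $S-v=S\setminus\{v\}$, $S+u=S\cup\{u\}$. Submodularity: $f(A\cup\{s\})-f(A)\ge f(B\cup\{s\})-f(B)$ for all $A\subseteq B\subseteq\mathcal{N}$, $s\notin B$. *)

From HB Require Import structures.
From mathcomp Require Import all_boot all_order all_algebra.
From mathcomp Require Import reals sequences exp.
Set Implicit Arguments. Unset Strict Implicit. Unset Printing Implicit Defensive.
Import Order.TTheory GRing.Theory Num.Theory.
Local Open Scope ring_scope.

Definition marg {T : finType} {R : realType} (f : {set T} -> R) (u : T) (A : {set T}) : R :=
  f (u |: A) - f A.

Definition nonneg_setfun {T : finType} {R : realType} (f : {set T} -> R) : Prop :=
  forall A, 0 <= f A.

Definition submodular {T : finType} {R : realType} (f : {set T} -> R) : Prop :=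
  forall (A B : {set T}) (s : T), A \subset B -> s \notin B ->
    f (s |: A) - f A >= f (s |: B) - f B.

Definition dummy {T : finType} {R : realType} (f : {set T} -> R) (d : T) : Prop :=
  forall A, f (d |: A) = f A.

Definition ceil_div (n k : nat) : nat := (n + k.-1) %/ k.

From HB Require Import structures.
From mathcomp Require Import all_boot all_order all_algebra.
From mathcomp Require Import reals sequences exp.
From mathcomp Require Import zify ring lra.
Import Order.TTheory GRing.Theory Num.Theory.
Local Open Scope ring_scope.

(* Let m = ceil(n/k), so that n <= k m. A uniform m-subset Z misses a fixed set A
   with probability C(n - |A|, m) / C(n, m) <= (1 - 1/k)^|A|, hence meets it with
   probability at least 1 - (1 - 1/k)^|A| >= (1 - 1/e) |A| / k (the left side is
   concave in |A| and |A| <= k). Peeling off the smallest weight turns this into: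
   for weights h >= 0 on T_+, any G with G(Z) >= h(y) for all y in Z and T_+ has
   average at least (1 - 1/e)/k times the total weight. Take
   h(x) = max(0, f(x | S) - f(v | S - v)) and G(Z) = f(S') - f(S): by submodularity
   and the choice of u, G(Z) >= h(y) for every y in Z \ S, and since v minimizes
   f(. | S - .) over T_- ⊆ S, the exchange hypothesis gives sum_{T_+} h >= eps f(S). *)

Lemma leq_ceil_div n k : (0 < k)%N -> (n <= k * ceil_div n k)%N.
Proof.
move=> k0; have := ltn_ceil (n + k.-1) k0; rewrite /ceil_div.
by set q := (_ %/ k)%N; nia.
Qed.

Lemma ceil_div_leq n k : (0 < k)%N -> (ceil_div n k <= n)%N.
Proof.
move=> k0; have := leq_divM (n + k.-1) k; rewrite /ceil_div.
by set q := (_ %/ k)%N; nia.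
Qed.

Lemma concave_one_subX {R : realType} {q : R} {i k : nat} :
  0 <= q -> q <= 1 -> (i <= k)%N -> i%:R * (1 - q ^+ k) <= k%:R * (1 - q ^+ i).
Proof.
move=> q0 q1 ik.
have geom j : 1 - q ^+ j = (1 - q) * \sum_(0 <= l < j) q ^+ l.
  by rewrite big_mkord -opprB subrX1 -mulNr opprB.
rewrite !geom (big_cat_nat (leq0n i) ik) /=.
set head := \sum_(0 <= l < i) q ^+ l; set tail := \sum_(i <= l < k) q ^+ l.
have qi0 : 0 <= q ^+ i by apply: exprn_ge0.
(* the first [i] terms are each [>= q ^+ i], the last [k - i] each [<= q ^+ i] *)
have head_ge : i%:R * q ^+ i <= head.
  rewrite /head mulr_natl -[X in _ *+ X](subn0 i) -sumr_const_nat.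
  by apply: ler_sum_nat => l /andP [_ li]; apply: ler_wiXn2l => //; exact: ltnW.
have tail_le : tail <= (k - i)%:R * q ^+ i.
  rewrite /tail mulr_natl -sumr_const_nat.
  by apply: ler_sum_nat => l /andP [il _]; exact: ler_wiXn2l.
rewrite natrB // in tail_le.
have ki : i%:R <= k%:R :> R by rewrite ler_nat.
have i0 : 0 <= i%:R :> R by [].
suff : i%:R * (head + tail) <= k%:R * head by nra.
nra.
Qed.

Lemma invr_expR1_le1 (R : realType) : (expR 1)^-1 <= 1 :> R.
Proof.
rewrite invr_le1 ?unitfE ?gt_eqF ?expR_gt0 //.
by apply: le_trans (expR_ge1Dx 1); rewrite lerDl.
Qed.

Section BinomialDecay.
Context (R : realType) {k : nat}.
Hypothesis k_gt0 : (0 < k)%N.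

Local Notation q := (1 - k%:R^-1 : R).

Let kR_gt0 : 0 < k%:R :> R. Proof. by rewrite ltr0n. Qed.

Lemma one_subVn_ge0 : 0 <= q.
Proof. by rewrite subr_ge0 invr_le1 // ?ler1n // unitfE gt_eqF. Qed.

Lemma one_subVn_le1 : q <= 1.
Proof. by rewrite gerBl invr_ge0 ltW. Qed.

Lemma one_subVn_expn_le : q ^+ k <= (expR 1)^-1.
Proof.
have -> : (expR 1)^-1 = expR (- k%:R^-1) ^+ k :> R.
  by rewrite -expRM_natl mulrN mulfV ?gt_eqF // expRN.
apply: lerXn2r; rewrite ?nnegrE ?one_subVn_ge0 ?expR_ge0 //.
exact: expR_ge1Dx.
Qed.

Lemma bin_predn_le a m : (0 < a)%N -> (a <= k * m)%N ->
  'C(a.-1, m)%:R <= q * 'C(a, m)%:R.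
Proof.
move=> a0 akm.
have sub_le : (k * (a - m) + a <= k * a)%N by nia.
have subR_le : (a - m)%:R <= a%:R * q.
  move: sub_le; rewrite -(ler_nat R) natrD !natrM => sub_le.
  rewrite -(ler_pM2l kR_gt0).
  have -> : k%:R * (a%:R * q) = k%:R * a%:R - a%:R by field; rewrite gt_eqF.
  by lra.
rewrite -(@ler_pM2l _ a%:R) ?ltr0n // -natrM mul_bin_down natrM mulrA.
by apply: ler_wpM2r.
Qed.

Lemma bin_subn_le n m i : (n <= k * m)%N -> (i <= n)%N ->
  'C(n - i, m)%:R <= q ^+ i * 'C(n, m)%:R.
Proof.
move=> nkm; elim: i => [|i IH] i_lt; first by rewrite subn0 expr0 mul1r.
rewrite subnS exprS -mulrA.
have nim : (n - i <= k * m)%N := leq_trans (leq_subr i n) nkm.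
apply: le_trans (bin_predn_le _ _ _ nim) _; first by rewrite subn_gt0.
by apply: ler_wpM2l; [exact: one_subVn_ge0 | exact/IH/ltnW].
Qed.

End BinomialDecay.

Section RandomSubset.
Context {R : realType} {T : finType}.

Lemma sum_draws_meet (m : nat) (A : {set T}) :
  \sum_(Z in [set Z : {set T} | #|Z| == m]) ((Z :&: A != set0)%:R : R)
    = 'C(#|T|, m)%:R - 'C(#|T| - #|A|, m)%:R.
Proof.
set Zs := [set Z : {set T} | #|Z| == m].
have miss_card : #|[set Z in Zs | Z :&: A == set0]| = 'C(#|T| - #|A|, m).
  rewrite -(cardsC A) addKn -cards_draws; apply: eq_card => Z.
  by rewrite !inE setI_eq0 disjoints_subset andbC.
have -> : 'C(#|T|, m)%:R = \sum_(Z in Zs) (1 : R) by rewrite sumr_const card_draws.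
rewrite -miss_card -sumr_const big_mkcond [X in _ = X - _]big_mkcond.
rewrite [X in _ = _ - X]big_mkcond -sumrB; apply: eq_bigr => Z _; rewrite inE.
by case: (Z \in Zs); case: (Z :&: A == set0); rewrite /= ?subr0 ?subrr.
Qed.

Lemma draws_meet_ge {k : nat} : (0 < k)%N -> forall A : {set T}, (#|A| <= k)%N ->
  (1 - (expR 1)^-1) * #|A|%:R / k%:R * #|[set Z : {set T} | #|Z| == ceil_div #|T| k]|%:R
    <= \sum_(Z in [set Z : {set T} | #|Z| == ceil_div #|T| k]) ((Z :&: A != set0)%:R : R).
Proof.
move=> k0 A Ak; rewrite sum_draws_meet card_draws.
set q := 1 - k%:R^-1 : R; set N := 'C(_, _)%:R; set D := 'C(_, _)%:R.
have miss_le : D <= q ^+ #|A| * N.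
  by apply: (bin_subn_le R k0); [exact: leq_ceil_div | exact: max_card].
have kR : 0 < k%:R :> R by rewrite ltr0n.
have meet_rate : (1 - (expR 1)^-1) * #|A|%:R / k%:R <= 1 - q ^+ #|A|.
  rewrite ler_pdivrMr // [X in _ <= X]mulrC.
  apply: le_trans (concave_one_subX (one_subVn_ge0 R k0) (one_subVn_le1 R k0) Ak).
  by rewrite mulrC ler_wpM2l // lerD2l lerN2 one_subVn_expn_le.
have N0 : 0 <= N by [].
by have := ler_wpM2r N0 meet_rate; lra.
Qed.

End RandomSubset.

Section DominatingSum.
Context {R : realType} {T : finType} {Zs : {set {set T}}} {c : R} {k : nat}.
Hypothesis meet_ge : forall A : {set T}, (#|A| <= k)%N ->
  c * #|A|%:R / k%:R * #|Zs|%:R <= \sum_(Z in Zs) ((Z :&: A != set0)%:R : R).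

(* Induction on [#|A|]: remove the minimum [mu] of [h], which lowers [h] by [mu]
   on [A] and [G] by [mu] exactly on the sets meeting [A]. *)
Lemma sum_dominating_ge (A : {set T}) (h : T -> R) (G : {set T} -> R) :
  (#|A| <= k)%N -> (forall x, x \in A -> 0 <= h x) ->
  (forall Z, Z \in Zs -> 0 <= G Z) ->
  (forall Z y, Z \in Zs -> y \in Z :&: A -> h y <= G Z) ->
  c / k%:R * #|Zs|%:R * \sum_(x in A) h x <= \sum_(Z in Zs) G Z.
Proof.
move cA: #|A| => j; elim: j A h G cA => [|j IH] A h G cA Ak h0 G0 hG.
  by move/cards0_eq: cA => ->; rewrite big_set0 mulr0; apply: sumr_ge0.
have [x0 x0A] : exists x, x \in A by apply/set0Pn; rewrite -card_gt0 cA.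
case: (arg_minP h x0A) => x1 x1A_ hmin; set mu := h x1.
have x1A : x1 \in A := x1A_.
have mu0 : 0 <= mu by apply: h0.
have cA' : #|A :\ x1| = j by move: cA; rewrite (cardsD1 x1) x1A => -[].
pose meetA Z : R := (Z :&: A != set0)%:R.
have IHA := IH (A :\ x1) (fun x => h x - mu) (fun Z => G Z - mu * meetA Z) cA' (ltnW Ak).
have {IH IHA} : c / k%:R * #|Zs|%:R * \sum_(x in A :\ x1) (h x - mu) <=
    \sum_(Z in Zs) (G Z - mu * meetA Z).
  apply: IHA.
  - by move=> x /setD1P [_ xA]; rewrite subr_ge0; apply: hmin.
  - move=> Z ZZs; rewrite /meetA; case: (set0Pn (Z :&: A)) => [[y yZA]|_].
      rewrite mulr1 subr_ge0; apply: le_trans (hG Z y ZZs yZA).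
      by apply: hmin; case/setIP: yZA.
    by rewrite mulr0 subr0; apply: G0.
  - move=> Z y ZZs /setIP [yZ /setD1P [_ yA]].
    have yZA : y \in Z :&: A by rewrite inE yZ yA.
    have -> : meetA Z = 1 by rewrite /meetA; case: set0Pn => // -[]; exists y.
    by rewrite mulr1 lerD2r; apply: hG.
rewrite !sumrB -mulr_sumr !sumr_const cA' (big_setD1 x1 x1A) /= -/mu.
set K := c / k%:R; set N := #|Zs|%:R.
have meet_A : K * (j%:R + 1) * N <= \sum_(Z in Zs) meetA Z.
  by rewrite natr1 -cA /K (mulrAC c); apply: meet_ge; rewrite cA.
have := ler_wpM2l mu0 meet_A; rewrite -mulr_natr.
lra.
Qed.

End DominatingSum.

Lemma sum_max0_subr_ge {R : realType} {I : finType} {P Q : {set I}} {h g : I -> R} {a e : R} :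
  \sum_(y in Q) g y + e <= \sum_(x in P) h x ->
  #|P| = #|Q| -> (forall y, y \in Q -> a <= g y) ->
  e <= \sum_(x in P) Num.max 0 (h x - a).
Proof.
move=> gap cPQ ag.
have sub_le : \sum_(x in P) (h x - a) <= \sum_(x in P) Num.max 0 (h x - a).
  by apply: ler_sum => x _; rewrite le_max lexx orbT.
have a_le : \sum_(y in Q) a <= \sum_(y in Q) g y by apply: ler_sum.
move: sub_le a_le; rewrite sumrB !sumr_const cPQ; lra.
Qed.

Section Swap.
Context {R : realType} {T : finType} (f : {set T} -> R) (S : {set T}) (v : T).

Definition swap (u : T) : {set T} :=
  if f S < f (u |: (S :\ v)) then u |: (S :\ v) else S.

Lemma swap_gain_ge0 u : 0 <= f (swap u) - f S.
Proof. by rewrite /swap subr_ge0; case: ltP => [/ltW|]. Qed.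

Lemma swap_gain_ge_marg u : submodular f -> v \in S -> u \notin S ->
  marg f u S - marg f v (S :\ v) <= f (swap u) - f S.
Proof.
move=> fsub vS uS.
have := fsub (S :\ v) S u (subD1set S v) uS.
rewrite /marg /swap setD1K //; case: ltP => [_|]; lra.
Qed.

Lemma swap_gain_ge_max0 u : submodular f -> v \in S -> u \notin S ->
  Num.max 0 (marg f u S - marg f v (S :\ v)) <= f (swap u) - f S.
Proof.
by move=> fsub vS uS; rewrite ge_max swap_gain_ge0 swap_gain_ge_marg.
Qed.

End Swap.

Theorem mainTheorem4 (R : realType) (T : finType) (f : {set T} -> R)
  (k : nat) (eps : R) (S : {set T}) (d : T)
  (t : nat) (Tp Tm : {set T})
  (u_of : {set T} -> T) (v : T) :
  nonneg_setfun f -> submodular f ->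
  (0 < k)%N -> 0 < eps -> #|S| = k ->
  d \notin S -> dummy f d ->
  (1 <= t <= k)%N -> Tp \subset ~: S -> Tm \subset S ->
  #|Tp| = t -> #|Tm| = t ->
  \sum_(x in Tp) marg f x S > \sum_(y in Tm) marg f y (S :\ y) + eps * f S ->
  (forall Z : {set T}, #|Z| = ceil_div #|T| k ->
     if [forall x in Z :\: S, marg f x S <= 0] then u_of Z = d
     else u_of Z \in Z :\: S /\ (forall x, x \in Z :\: S -> marg f x S <= marg f (u_of Z) S)) ->
  v \in S -> (forall y, y \in S -> marg f v (S :\ v) <= marg f y (S :\ y)) ->
  let S' := fun Z : {set T} =>
    if f (u_of Z |: (S :\ v)) > f S then u_of Z |: (S :\ v) else S in
  let Zs := [set Z : {set T} | #|Z| == ceil_div #|T| k] in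
  (#|Zs|%:R)^-1 * \sum_(Z in Zs) (f (S' Z) - f S)
    >= (1 - (expR 1)^-1) * eps / k%:R * f S.
Proof.
move=> _ fsub k0 _ _ dS dum_d /andP [_ tk] TpS TmS cTp cTm gap u_ofP vS vmin /=.
set Zs := [set Z : {set T} | _].
set a := marg f v (S :\ v); set c := 1 - (expR 1)^-1.
pose h x := Num.max 0 (marg f x S - a).
have u_of_max Z : Z \in Zs -> u_of Z \notin S /\
    forall y, y \in Z :\: S -> marg f y S <= marg f (u_of Z) S.
  rewrite inE => /eqP/u_ofP; case: ifP => [/forall_inP all_le0 -> | _ [/setDP[_ uS] //]].
  by split=> // y /all_le0; rewrite /marg dum_d subrr.
have dominated : c / k%:R * #|Zs|%:R * \sum_(x in Tp) h x <= \sum_(Z in Zs) (f (swap f S v (u_of Z)) - f S).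
  apply: (sum_dominating_ge (draws_meet_ge k0)); rewrite ?cTp //.
  - by move=> x _; rewrite le_max lexx.
  - by move=> Z _; apply: swap_gain_ge0.
  move=> Z y /u_of_max [uS u_max] /setIP [yZ yTp].
  have yS : y \in Z :\: S by rewrite inE yZ -in_setC (subsetP TpS).
  apply: le_trans (swap_gain_ge_max0 f S v _ fsub vS uS).
  by rewrite le_max2 // lerD2r u_max.
have eps_le : eps * f S <= \sum_(x in Tp) h x.
  apply: (sum_max0_subr_ge (ltW gap)); first by rewrite cTp cTm.
  by move=> y /(subsetP TmS); apply: vmin.
have N_gt0 : 0 < #|Zs|%:R :> R by rewrite ltr0n card_draws bin_gt0 ceil_div_leq.
rewrite -(ler_pM2l N_gt0) [X in _ <= X]mulrA mulfV ?gt_eqF // mul1r; apply: le_trans dominated.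
have -> : #|Zs|%:R * (c * eps / k%:R * f S) = c / k%:R * #|Zs|%:R * (eps * f S) by ring.
by apply: ler_wpM2l eps_le; rewrite !mulr_ge0 ?invr_ge0 ?subr_ge0 ?invr_expR1_le1 // ltW.
Qed.
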